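(* Let $S$ be an uncovered set of patterns and let $f_n$ denote the number of rooted labeled forests on $[n]$ avoiding $S$. Then $L_S=\lim_{n\to\infty}\frac{f_n^{1/n}}{n}$ equals $e^{-1}$ if and only if $S$ contains $12$ or $21$.
   Context: A rooted labeled forest on $[n]$ is an unordered forest on $n$ vertices, each component with a distinguished root, with distinct labels from $[n]$. A pattern of length $k$ is a permutation of $[k]$; an instance of it is a sequence of vertices $v_1,\dots,v_k$ with $v_i$ a strict ancestor of $v_{i+1}$ whose labels are in the same relative order as the pattern; a forest avoids $S$ if it contains no instance of any pattern in $S$. A set $S$ of patterns is covered if it contains a pattern $\pi$ of length $k$ with $\pi(1)=1$ and a pattern $\sigma$ of length $\ell$ with $\sigma(1)=\ell$; otherwise $S$ is uncovered. *)

From HB Require Import structures.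
From mathcomp Require Import all_boot all_order all_fingroup all_algebra.
From mathcomp Require Import all_classical all_reals all_analysis.
Set Implicit Arguments. Unset Strict Implicit. Unset Printing Implicit Defensive.

(* A rooted labeled forest on [n] is encoded by its parent function on the
   vertex set 'I_n (vertex i carries label i+1): par v = None iff v is a root,
   par v = Some u iff u is the parent of v. *)
Definition parfun (n : nat) := {ffun 'I_n -> option 'I_n}.

Definition strict_anc n (par : parfun n) (u v : 'I_n) : Prop :=
  exists m : nat, iter m.+1 (fun o => obind par o) (Some v) = Some u.

Definition is_forest n (par : parfun n) : Prop :=
  forall v : 'I_n, ~ strict_anc par v v.

(* A pattern of length k+1 (k+1 >= 1) is a permutation in 'S_(k+1);
   pi i (i : 'I_k.+1) is its (i+1)-th entry (0-based values). *)
Definition contains n (par : parfun n) k (pi : 'S_k.+1) : Prop :=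
  exists w : 'I_k.+1 -> 'I_n,
    (forall i j : 'I_k.+1, nat_of_ord j = (nat_of_ord i).+1 ->
        strict_anc par (w i) (w j)) /\
    (forall i j : 'I_k.+1, (w i < w j)%N = (pi i < pi j)%N).

Definition patset := forall k : nat, pred 'S_k.+1.

Definition avoids n (par : parfun n) (S : patset) : Prop :=
  forall k (pi : 'S_k.+1), S k pi -> ~ contains par pi.

Definition covered (S : patset) : Prop :=
  (exists k (pi : 'S_k.+1), S k pi /\ pi ord0 = ord0) /\
  (exists l (sg : 'S_l.+1), S l sg /\ sg ord0 = ord_max).

Definition uncovered (S : patset) : Prop := ~ covered S.

Definition num_avoiding (S : patset) (n : nat) : nat :=
  #|[set par : parfun n | `[< is_forest par /\ avoids par S >] ]|.

Definition pat12 : 'S_2 := 1%g.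
Definition pat21 : 'S_2 := tperm (ord0 : 'I_2) ord_max.

(* If 12 is in S, uncoveredness leaves no pattern of S starting with its
   maximum.  Decreasing forests (every parent larger than its children) avoid
   all such patterns, and avoiding 12 forces a forest to be decreasing; hence
   f_n = n! and f_n^(1/n)/n -> 1/e.  The case of 21 is the image of this one
   under complementation of labels, i <-> n+1-i.
   If S contains neither, then after complementing no pattern of S starts with
   its maximum.  In a decreasing forest F, call a leaf c graftable if some
   smaller vertex has the same parent as c.  Re-hanging any set X of graftable
   leaves below the smallest vertex sharing their parent gives a forest in
   which every instance of length >= 3 starts at its maximum, so it avoids S;
   and F, X can be read off from it.  The average number of graftable leaves is
   at least (n+1)/6, so by convexity of exp, f_n >= n! 2^(n/6), and
   f_n^(1/n)/n stays above 2^(1/6)/e on a tail. *)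

From HB Require Import structures.
From mathcomp Require Import all_boot all_order all_fingroup all_algebra.
From mathcomp Require Import all_classical all_reals all_analysis.
From mathcomp Require Import zify ring lra.
Import Order.TTheory GRing.Theory Num.Theory numFieldNormedType.Exports.
Set Implicit Arguments. Unset Strict Implicit. Unset Printing Implicit Defensive.

(** * Ancestors and chains *)

Section Ancestry.
Variable n : nat.
Implicit Types (par : parfun n) (u v w : 'I_n).

Lemma iter_obind_None par m : iter m (fun o => obind par o) None = None.
Proof. by elim: m => //= m ->. Qed.

Lemma strict_anc_parent par u v : par v = Some u -> strict_anc par u v.
Proof. by exists 0%N. Qed.

Lemma strict_ancE par u v : strict_anc par u v <->
  par v = Some u \/ exists2 y, par v = Some y & strict_anc par u y.
Proof.
split=> [[m]|[h|[y h [m hm]]]]; last 2 first.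
- by exists 0%N.
- by exists m.+1; rewrite iterSr /= h.
rewrite iterSr /=; case: m => [|m] /=; first by left.
case E: (par v) => [y|]; last by rewrite iter_obind_None.
by right; exists y => //; exists m.
Qed.

Lemma strict_anc_trans par u v w :
  strict_anc par u v -> strict_anc par v w -> strict_anc par u w.
Proof. by case=> a ha [b hb]; exists (a + b.+1)%N; rewrite -addSn iterD hb. Qed.

Lemma strict_anc_ind par (P : 'I_n -> 'I_n -> Prop) :
  (forall v u, par v = Some u -> P v u) ->
  (forall v y u, par v = Some y -> P y u -> P v u) ->
  forall u v, strict_anc par u v -> P v u.
Proof.
move=> Ppar Pstep u v [m]; elim: m v => [|m IH] v; first exact: Ppar.
rewrite iterSr /=; case E: (par v) => [y|]; last by rewrite iter_obind_None.
by move=> /IH; apply: Pstep E.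
Qed.

Definition chain par k (w : 'I_k.+1 -> 'I_n) :=
  forall i j : 'I_k.+1, nat_of_ord j = (nat_of_ord i).+1 ->
    strict_anc par (w i) (w j).

Lemma chain_anc0 par k (w : 'I_k.+1 -> 'I_n) :
  chain par w -> forall i, i != ord0 -> strict_anc par (w ord0) (w i).
Proof.
move=> hc [i hi]; rewrite -val_eqE /=; case: i hi => // i.
elim: i => [|i IH] hi _; first exact: hc.
have hi' : (i.+1 < k.+1)%N by apply: ltn_trans hi.
apply: strict_anc_trans (IH hi' isT) _; exact: (hc (Ordinal hi') (Ordinal hi)).
Qed.

End Ancestry.

Lemma instance_max_start n k (pi : 'S_k.+1) (w : 'I_k.+1 -> 'I_n) :
  (forall i j, (w i < w j)%N = (pi i < pi j)%N) ->
  (forall i, i != ord0 -> (w i < w ord0)%N) -> pi ord0 = ord_max.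
Proof.
move=> wpi wmax; set j := (pi^-1 ord_max)%g.
have pj : pi j = ord_max by rewrite /j permKV.
have [<-//|nj0] := eqVneq j ord0.
by have := wmax _ nj0; rewrite wpi pj ltnNge leq_ord.
Qed.

Definition no_max_start (S : patset) :=
  forall k (pi : 'S_k.+1), S k pi -> pi ord0 != ord_max.

Lemma uncovered_no_max_start12 S : uncovered S -> S 1%N pat12 -> no_max_start S.
Proof.
move=> hu h12 k pi Spi; apply/eqP => pi0; apply: hu; split; last by exists k, pi.
by exists 1%N, pat12; rewrite /pat12 perm1.
Qed.

(** * Decreasing forests *)

Lemma card_option_pred (T : finType) (A : pred (option T)) :
  #|A| = ((None \in A) + #|[pred x | Some x \in A]|)%N.
Proof.
rewrite (cardD1 None); congr (_ + _)%N.
have Some_inj : injective (@Some T) by move=> ? ? [].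
rewrite -(fintype.card_image Some_inj); apply: eq_card => -[x|]; rewrite !inE /=.
  by rewrite fintype.mem_image.
by apply/esym/fintype.imageP => -[].
Qed.

Lemma card_predD1 (T : finType) (A : pred T) x :
  #|[pred y | A y && (y != x)]| = (#|A| - (x \in A))%N.
Proof. by rewrite (cardD1 x A) addKn; apply: eq_card => y; rewrite !inE andbC. Qed.

Section Decreasing.
Variable n : nat.
Implicit Types (par : parfun n) (u v : 'I_n).

Definition above v : pred (option 'I_n) :=
  fun o => if o is Some u then (v < u)%N else true.

Definition decreasing par := [forall v, above v (par v)].

Lemma decreasingP par : decreasing par -> forall v u, par v = Some u -> (v < u)%N.
Proof. by move=> /forallP dec v u pv; have := dec v; rewrite pv. Qed.

Lemma decreasing_anc par u v : decreasing par -> strict_anc par u v -> (v < u)%N.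
Proof.
move=> dec; apply: (strict_anc_ind (P := fun a b => a < b)%N).
  exact: decreasingP.
by move=> a b c /(decreasingP dec); apply: ltn_trans.
Qed.

Lemma decreasing_forest par : decreasing par -> is_forest par.
Proof. by move=> dec v /(decreasing_anc dec); rewrite ltnn. Qed.

Lemma decreasing_avoids par S : decreasing par -> no_max_start S -> avoids par S.
Proof.
move=> dec hS k pi Spi [w [wchain wpi]].
have /eqP := hS _ _ Spi; apply; apply: (instance_max_start wpi) => i i0.
exact: decreasing_anc dec (chain_anc0 wchain i0).
Qed.

Lemma avoids12_decreasing par : is_forest par -> ~ contains par pat12 -> decreasing par.
Proof.
move=> hf no12; apply/forallP => v; rewrite /above.
case pv: (par v) => [u|] //; rewrite ltnNge; apply/negP => uv.
have vu : u != v.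
  by apply/eqP => eq_uv; apply: (hf v); apply: strict_anc_parent; rewrite pv eq_uv.
have {vu uv}uv : (u < v)%N by rewrite ltn_neqAle uv andbT val_eqE.
apply: no12; exists (fun i : 'I_2 => if val i == 0%N then u else v); split.
  by move=> [[|[|i]] hi] [[|[|j]] hj] //= _; apply: strict_anc_parent.
move=> [[|[|i]] hi] [[|[|j]] hj] //=; rewrite /pat12 !perm1 /= ?ltnn ?uv //.
by rewrite ltnNge ltnW.
Qed.

Lemma card_ord_gt m : #|[pred u : 'I_n | (m < u)%N]| = (n - m.+1)%N.
Proof.
rewrite -sum1_card big_mkcond /= -(big_mkord xpredT (fun i => (m < i : nat))).
elim: n => [|k IH]; first by rewrite big_geq.
by rewrite big_nat_recr //= IH; case: ltnP; lia.
Qed.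

Lemma card_above v : #|above v| = (n - v)%N.
Proof.
rewrite card_option_pred (eq_card (B := [pred u : 'I_n | (v < u)%N])) ?card_ord_gt.
  by rewrite unfold_in /=; have := ltn_ord v; lia.
by move=> u; rewrite !unfold_in.
Qed.

Lemma card_parfun_family (F : 'I_n -> pred (option 'I_n)) :
  #|[set par : parfun n | [forall v, F v (par v)]]| = (\prod_(v < n) #|F v|)%N.
Proof.
transitivity #|family F|; last by rewrite card_family foldrE big_map big_enum.
by apply: eq_card => par; rewrite inE; apply/forallP/familyP.
Qed.

End Decreasing.

Lemma prod_ord_subn n : (\prod_(v < n) (n - v))%N = n`!.
Proof.
elim: n => [|n IH]; first by rewrite big_ord0.
by rewrite big_ord_recl /= subn0 factS -IH.
Qed.

Lemma card_decreasing n : #|[set par : parfun n | decreasing par]| = n`!.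
Proof.
rewrite card_parfun_family -prod_ord_subn; apply: eq_bigr => v _.
exact: card_above.
Qed.

Lemma num_avoiding12 S n :
  uncovered S -> S 1%N pat12 -> num_avoiding S n = n`!.
Proof.
move=> hu h12; rewrite /num_avoiding -card_decreasing; apply: eq_card => par.
rewrite !inE; apply/asboolP/idP => [[hf ha]|dec].
  exact: avoids12_decreasing hf (ha _ _ h12).
split; first exact: decreasing_forest.
exact: decreasing_avoids dec (uncovered_no_max_start12 hu h12).
Qed.

(** * Complementation of labels *)

Section Complement.
Variable n : nat.
Implicit Types (par : parfun n) (u v : 'I_n).

Definition compl_forest par : parfun n :=
  [ffun v => omap (@rev_ord n) (par (rev_ord v))].

Lemma compl_forestK : involutive compl_forest.
Proof.
move=> par; apply/ffunP => v; rewrite !ffunE rev_ordK.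
by case: (par v) => //= u; rewrite rev_ordK.
Qed.

Lemma strict_anc_compl par u v :
  strict_anc par u v -> strict_anc (compl_forest par) (rev_ord u) (rev_ord v).
Proof.
have iter_compl m o : iter m (fun o => obind (compl_forest par) o) (omap (@rev_ord n) o)
    = omap (@rev_ord n) (iter m (fun o => obind par o) o).
  elim: m => //= m ->; case: (iter m _ o) => //= x.
  by rewrite ffunE rev_ordK.
by case=> m hm; exists m; rewrite -[Some (rev_ord v)]/(omap _ (Some v)) iter_compl hm.
Qed.

Lemma is_forest_compl par : is_forest par -> is_forest (compl_forest par).
Proof. by move=> hf v /strict_anc_compl; rewrite compl_forestK; apply: hf. Qed.

End Complement.

Definition compl_pat k (pi : 'S_k.+1) : 'S_k.+1 := (pi * perm (@rev_ord_inj k.+1))%g.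

Lemma compl_patE k (pi : 'S_k.+1) i : compl_pat pi i = rev_ord (pi i).
Proof. by rewrite permM permE. Qed.

Lemma compl_patK k : involutive (@compl_pat k).
Proof. by move=> pi; apply/permP => i; rewrite !compl_patE rev_ordK. Qed.

Lemma compl_pat12 : compl_pat pat12 = pat21.
Proof.
apply/permP => i; rewrite compl_patE /pat12 /pat21 perm1.
by case: i => [[|[|i]] hi] //; apply: val_inj; rewrite permE.
Qed.

Lemma contains_compl n (par : parfun n) k (pi : 'S_k.+1) :
  contains par pi -> contains (compl_forest par) (compl_pat pi).
Proof.
case=> w [wchain wpi]; exists (fun i => rev_ord (w i)); split=> [i j ij|i j].
  exact/strict_anc_compl/wchain.
have rev_ltn m (a b : 'I_m) : (rev_ord a < rev_ord b)%N = (b < a)%N.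
  by rewrite /=; have := ltn_ord a; have := ltn_ord b; lia.
by rewrite !compl_patE !rev_ltn wpi.
Qed.

Definition compl_patset (S : patset) : patset := fun k pi => S k (compl_pat pi).

Lemma avoids_compl n (par : parfun n) S :
  avoids par S -> avoids (compl_forest par) (compl_patset S).
Proof. by move=> ha k pi Spi /contains_compl; rewrite compl_forestK; apply: ha. Qed.

Lemma num_avoiding_compl S n : num_avoiding (compl_patset S) n = num_avoiding S n.
Proof.
rewrite /num_avoiding -[in RHS](card_imset _ (can_inj (@compl_forestK n))).
apply: eq_card => par; rewrite inE; apply/asboolP/imsetP => [[hf ha]|[q]].
  exists (compl_forest par); last by rewrite compl_forestK.
  rewrite inE; apply/asboolP; split; first exact: is_forest_compl.
  by move=> k pi; rewrite -{1}[pi]compl_patK => Spi; apply: (avoids_compl ha Spi).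
by rewrite inE => /asboolP [hf ha] ->; split; [apply: is_forest_compl|apply: avoids_compl].
Qed.

Lemma compl_pat_ord0 k (pi : 'S_k.+1) :
  (compl_pat pi ord0 == ord_max) = (pi ord0 == ord0).
Proof.
rewrite compl_patE -(inj_eq rev_ord_inj) rev_ordK; congr (_ == _).
by apply: val_inj => /=; rewrite subnn.
Qed.

Lemma uncovered_compl S : uncovered S -> uncovered (compl_patset S).
Proof.
move=> hu [[k [pi [Spi pi0]]] [l [sg [Ssg sg0]]]]; apply: hu; split.
  exists l, (compl_pat sg); split=> //.
  by apply/eqP; rewrite -compl_pat_ord0 compl_patK sg0.
by exists k, (compl_pat pi); split=> //; apply/eqP; rewrite compl_pat_ord0 pi0.
Qed.

Lemma uncovered_no_max_start S :
  uncovered S -> no_max_start S \/ no_max_start (compl_patset S).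
Proof.
move=> hu; have [[k [pi [Spi pi0]]]|no_max] :=
  pselect (exists k (pi : 'S_k.+1), S k pi /\ pi ord0 = ord_max); last first.
  by left=> k pi Spi; apply/eqP => pi0; apply: no_max; exists k, pi.
right=> l sg Ssg; rewrite -[sg]compl_patK compl_pat_ord0; apply/eqP => sg0.
by apply: hu; split; [exists l, (compl_pat sg) | exists k, pi].
Qed.

Lemma num_avoiding_fact S n : uncovered S ->
  S 1%N pat12 \/ S 1%N pat21 -> num_avoiding S n = n`!.
Proof.
move=> hu [h12|h21]; first exact: num_avoiding12.
rewrite -num_avoiding_compl num_avoiding12 //; first exact: uncovered_compl.
by rewrite /compl_patset compl_pat12.
Qed.

(** * Grafting leaves *)

Section Grafting.
Variable n : nat.
Implicit Types (par G : parfun n) (u v c : 'I_n) (X : {set 'I_n}).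

Definition is_leaf par c := [forall v, par v != Some c].

Definition graftable par :=
  [set c | is_leaf par c && [exists v : 'I_n, (v < c)%N && (par v == par c)]].

Definition min_sibling par c := [arg min_(v < c | par v == par c) (v : nat)].

(* In [graft F X] the vertices of X are exactly those with a smaller parent;
   this is how [ungraft] and [ascents] recover F and X. *)
Definition graft par X : parfun n :=
  [ffun v => if v \in X then Some (min_sibling par v) else par v].

Definition ungraft G : parfun n :=
  [ffun v => if G v is Some u then (if (u < v)%N then G u else G v) else None].

Definition ascents G := [set v | if G v is Some u then (u < v)%N else false].

Lemma min_siblingP par c :
  par (min_sibling par c) = par c /\
  forall v, par v = par c -> (min_sibling par c <= v)%N.
Proof.
rewrite /min_sibling; case: arg_minnP => [//|m /eqP pm min_m].
by split=> // v pv; apply: min_m; rewrite pv.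
Qed.

Lemma graftable_leaf par c v : c \in graftable par -> par v != Some c.
Proof. by rewrite inE => /andP [/forallP]. Qed.

Lemma min_sibling_lt par c : c \in graftable par -> (min_sibling par c < c)%N.
Proof.
rewrite inE => /andP [_ /existsP [v /andP [vc /eqP pv]]].
by have [_ /(_ v pv) le] := min_siblingP par c; apply: leq_ltn_trans le vc.
Qed.

Lemma min_sibling_notin par c : min_sibling par c \notin graftable par.
Proof.
apply/negP; rewrite inE => /andP [_ /existsP [v /andP [lt /eqP pv]]].
have [pm min_m] := min_siblingP par c.
by have := min_m v (etrans pv pm); rewrite leqNgt lt.
Qed.

Variable F : parfun n.
Hypothesis decF : decreasing F.
Variable X : {set 'I_n}.
Hypothesis graftX : X \subset graftable F.

Let G := graft F X.

Lemma graftable_X c : c \in X -> c \in graftable F.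
Proof. exact: fintype.subsetP graftX c. Qed.

Lemma min_sibling_notX c : min_sibling F c \notin X.
Proof. exact: contra (@graftable_X _) (min_sibling_notin F c). Qed.

Lemma graft_in v : v \in X -> G v = Some (min_sibling F v).
Proof. by move=> vX; rewrite /G ffunE vX. Qed.

Lemma graft_notin v : v \notin X -> G v = F v.
Proof. by move=> vX; rewrite /G ffunE (negbTE vX). Qed.

Lemma graft_leaf c v : c \in X -> G v != Some c.
Proof.
move=> cX; have [vX|vX] := boolP (v \in X).
  by rewrite graft_in //; apply: contraNneq (min_sibling_notX v) => -[->].
by rewrite graft_notin //; apply/graftable_leaf/graftable_X.
Qed.

Lemma graft_anc_notX u v : strict_anc G u v -> u \notin X.
Proof.
have Gleaf a b : G a = Some b -> b \notin X.
  by move=> Gab; apply: contraTN isT => bX; have := graft_leaf a bX; rewrite Gab eqxx.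
by apply: (strict_anc_ind (P := fun _ b => b \notin X)) => // a b c /Gleaf.
Qed.

Lemma graft_anc_out u v : v \notin X -> strict_anc G u v -> strict_anc F u v.
Proof.
move=> vX Guv; apply: (strict_anc_ind (P := fun a b => a \notin X -> strict_anc F b a))
  Guv vX => [a b Gab aX|a b c Gab IH aX].
  by apply: strict_anc_parent; rewrite -graft_notin.
have bX := graft_anc_notX (strict_anc_parent Gab).
apply: strict_anc_trans (IH bX) _; apply: strict_anc_parent; by rewrite -graft_notin.
Qed.

Lemma graft_anc u v : strict_anc G u v ->
  (v < u)%N \/ (v \in X /\ u = min_sibling F v).
Proof.
move=> Guv; have [vX|vX] := boolP (v \in X); last first.
  by left; apply: decreasing_anc decF (graft_anc_out vX Guv).
move/strict_ancE: Guv; rewrite graft_in // => -[[<-]|[y [<-] Guy]]; first by right.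
left; apply: (decreasing_anc decF); apply/strict_ancE.
move/strict_ancE: (graft_anc_out (min_sibling_notX v) Guy).
by have [-> _] := min_siblingP F v.
Qed.

Lemma graft_forest : is_forest G.
Proof.
move=> v /graft_anc [|[vX vmin]]; first by rewrite ltnn.
by have := min_sibling_lt (graftable_X vX); rewrite -vmin ltnn.
Qed.

Lemma graft_chain_max k (w : 'I_k.+2.+1 -> 'I_n) :
  chain G w -> forall i, i != ord0 -> (w i < w ord0)%N.
Proof.
move=> wchain i i0; have [//|[wiX w0]] := graft_anc (chain_anc0 wchain i0).
(* Otherwise w i is a grafted leaf whose parent is w 0.  Having no descendant
   rules out i = 1, and for i > 1 its ancestor w (i-1) would be w 0 or lie
   above w 0, closing a cycle. *)
exfalso; have [i1|i1] := eqVneq (nat_of_ord i) 1%N.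
  have two : (2 < k.+3)%N by [].
  have i2 : nat_of_ord (Ordinal two) = (nat_of_ord i).+1 by rewrite i1.
  by have := graft_anc_notX (wchain _ _ i2); rewrite wiX.
have ipred : (i.-1 < k.+3)%N by have := ltn_ord i; lia.
have i_gt0 : (0 < i)%N by rewrite lt0n; apply: contraNneq i0 => i_0; apply/eqP/val_inj.
have iS : nat_of_ord i = (val (Ordinal ipred)).+1 by rewrite /= prednK.
have w0_anc : strict_anc G (w ord0) (w (Ordinal ipred)).
  by apply: (chain_anc0 wchain); rewrite -val_eqE /=; lia.
move/strict_ancE: (wchain _ _ iS); rewrite graft_in // -w0 => -[[wpred]|[y [<-] Gyw]].
  by move: w0_anc; rewrite wpred; apply: graft_forest.
exact: graft_forest (strict_anc_trans w0_anc Gyw).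
Qed.

Lemma ungraft_graft : ungraft G = F.
Proof.
apply/ffunP => v; rewrite ffunE; have [vX|vX] := boolP (v \in X).
  rewrite graft_in // (min_sibling_lt (graftable_X vX)) graft_notin ?min_sibling_notX //.
  by have [-> _] := min_siblingP F v.
rewrite graft_notin //; case Fv: (F v) => [u|] //.
by rewrite ltnNge ltnW ?(decreasingP decF Fv) //= graft_notin.
Qed.

Lemma ascents_graft : ascents G = X.
Proof.
apply/setP => v; rewrite inE; have [vX|vX] := boolP (v \in X).
  by rewrite graft_in // min_sibling_lt // graftable_X.
rewrite graft_notin //; case Fv: (F v) => [u|] //.
by rewrite ltnNge ltnW ?(decreasingP decF Fv).
Qed.

End Grafting.

Lemma perm2_eq1 (pi : 'S_2) : pi ord0 != ord_max -> pi = 1%g.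
Proof.
move=> pi0; have e0 : pi ord0 = ord0.
  by apply/val_inj; move: pi0; rewrite -val_eqE /=; have := ltn_ord (pi ord0); lia.
apply/permP => -[[|[|i]] hi] //; rewrite perm1; apply: val_inj => /=.
  by rewrite (_ : Ordinal hi = ord0) ?e0 //; apply: val_inj.
have : pi ord_max != pi ord0 by rewrite (inj_eq perm_inj).
rewrite (_ : Ordinal hi = ord_max); last exact: val_inj.
by rewrite e0 -val_eqE /=; have := ltn_ord (pi ord_max); lia.
Qed.

Lemma graft_avoids n (F : parfun n) (X : {set 'I_n}) S :
  decreasing F -> X \subset graftable F -> no_max_start S -> ~~ S 1%N pat12 ->
  avoids (graft F X) S.
Proof.
move=> decF graftX hS no12 k pi Spi [w [wchain wpi]]; have /eqP := hS _ _ Spi.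
case: k pi Spi w wchain wpi => [|[|k]] pi Spi w wchain wpi; apply.
- by apply: val_inj; have := ltn_ord (pi ord0); rewrite /=; lia.
- by apply/eqP; apply: contraNT no12 => /perm2_eq1 pi1; rewrite /pat12 -pi1.
- exact: instance_max_start wpi (graft_chain_max decF graftX wchain).
Qed.

Lemma sum_pow2_graftable_le n S : no_max_start S -> ~~ S 1%N pat12 ->
  (\sum_(F : parfun n | decreasing F) 2 ^ #|graftable F| <= num_avoiding S n)%N.
Proof.
move=> hS no12.
pose D := [set FX : parfun n * {set 'I_n} |
  decreasing FX.1 && (FX.2 \subset graftable FX.1)].
have graft_inj : {in D &, injective (fun FX => graft FX.1 FX.2)}.
  move=> [F1 X1] [F2 X2]; rewrite !inE /= => /andP [dec1 sub1] /andP [dec2 sub2] eqG.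
  have : (ungraft (graft F1 X1), ascents (graft F1 X1)) =
         (ungraft (graft F2 X2), ascents (graft F2 X2)) by rewrite /= eqG.
  by rewrite !ungraft_graft ?ascents_graft.
have -> : (\sum_(F : parfun n | decreasing F) 2 ^ #|graftable F|)%N = #|D|.
  rewrite (eq_bigr (fun F => \sum_(X in powerset (graftable F)) 1)%N); last first.
    by move=> F _; rewrite sum1_card card_powerset.
  rewrite pair_big_dep /= sum1_card; apply: eq_card => -[F X].
  by rewrite [in RHS]inE unfold_in /= powersetE.
rewrite -(card_in_imset graft_inj); apply/subset_leq_card/fintype.subsetP => G.
case/imsetP => -[F X]; rewrite /D inE /= => /andP [decF graftX] ->; rewrite inE.
by apply/asboolP; split; [apply: graft_forest|apply: graft_avoids].
Qed.

(** * Counting graftable leaves *)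

(* For m = 1 (resp. 2) the product counts the decreasing forests on [n] in
   which every v < c avoids one (resp. two) prescribed parent values. *)
Lemma prod_subn_ffact n c m : (c <= n)%N ->
  ((\prod_(v < n) (n - v - m * (v < c))) * n ^_ m = n`! * (n - c) ^_ m)%N.
Proof.
have prodS k d : (\prod_(v < k.+1) (k.+1 - v - m * (v < d.+1)) =
    (k.+1 - m) * \prod_(v < k) (k - v - m * (v < d)))%N.
  by rewrite big_ord_recl /= subn0 muln1.
have ffactS k : ((k.+1 - m) * k.+1 ^_ m = k.+1 * k ^_ m)%N.
  by case: m {prodS} => [|m]; rewrite ?ffactSS ?subSS ?ffactnSr ?muln1 //; ring.
elim: n c => [|n IH] [|c] // cn; first by rewrite big_ord0.
  rewrite (eq_bigr (fun v : 'I_n.+1 => n.+1 - v)%N) ?prod_ord_subn // => v _.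
  by rewrite ltn0 muln0 subn0.
rewrite prodS subSS factS -[RHS]mulnA -(IH c cn) mulnAC ffactS; ring.
Qed.

Section GraftableCount.
Variables (n : nat) (c : 'I_n).

Definition leaf_forests := [set F : parfun n | decreasing F && is_leaf F c].

Definition least_leaf_forests :=
  [set F in leaf_forests | [forall v : 'I_n, (v < c)%N ==> (F v != F c)]].

Lemma card_leaf_forests : (#|leaf_forests| * n = n`! * (n - c))%N.
Proof.
have -> : leaf_forests =
    [set F : parfun n | [forall v, [pred o | above v o && (o != Some c)] (F v)]].
  apply/setP => F; rewrite !inE; apply/andP/forallP => [[/forallP dec /forallP leaf] v|h].
    by rewrite /= dec leaf.
  by split; apply/forallP => v; have /andP [] := h v.
rewrite (card_parfun_family (fun v => [pred o | above v o && (o != Some c)])).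
have := prod_subn_ffact 1 (ltnW (ltn_ord c)); rewrite !ffactn1 => <-.
congr (_ * _)%N; apply: eq_bigr => v _.
by rewrite card_predD1 card_above mul1n unfold_in.
Qed.

(* Once the parent p of c is fixed, each v < c must avoid the parents Some c and p. *)
Lemma card_least_leaf_fiber p :
  (#|[set F in least_leaf_forests | F c == p]| <=
     above c p * \prod_(v < n)
       (if (v < c)%N then n - v - 2 else if v == c :> nat then 1 else n - v))%N.
Proof.
pose G (v : 'I_n) : pred (option 'I_n) := fun o =>
  if (v < c)%N then [&& above v o, o != Some c & o != p]
  else if v == c :> nat then o == p else above v o.
have [abp|nabp] := boolP (above c p); last first.
  rewrite mul0n leqn0 cards_eq0; apply/eqP/setP => F; rewrite !inE.
  apply/negP => /andP [/andP [/andP [/forallP dec _] _] /eqP Fc].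
  by have := dec c; rewrite Fc (negbTE nabp).
rewrite mul1n; apply: leq_trans (_ : #|[set F : parfun n | [forall v, G v (F v)]]| <= _)%N.
  apply/subset_leq_card/fintype.subsetP => F; rewrite !inE.
  case/andP => /andP [/andP [/forallP dec /forallP leaf] /forallP least] /eqP Fc.
  apply/forallP => v; rewrite /G /=; case: ifP => vc.
    by rewrite dec leaf -Fc (implyP (least v) vc).
  by case: ifP => [/eqP/val_inj->|_]; rewrite ?Fc ?eqxx ?dec.
rewrite card_parfun_family; apply/eq_leq/eq_bigr => v _; rewrite /G.
have [vc|cv|vc] := ltngtP v c; last first.
- by rewrite (eq_card (B := pred1 p)) ?card1.
- by rewrite -card_above; apply: eq_card => o; rewrite !unfold_in.
have pv : p \in [pred o | above v o && (o != Some c)].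
  move: abp; rewrite unfold_in /=; case: (p) => [u|] //= cu.
  by rewrite (ltn_trans vc cu) andTb; apply: contraTneq cu => -[->]; rewrite ltnn.
rewrite (eq_card (B := [pred o | [pred o | above v o && (o != Some c)] o && (o != p)])).
  by rewrite !card_predD1 card_above pv unfold_in /= vc; lia.
by move=> o; rewrite !unfold_in /= andbA.
Qed.

Lemma card_least_leaf_forests_le :
  (#|least_leaf_forests| <= \prod_(v < n) (n - v - 2 * (v < c)))%N.
Proof.
have -> : #|least_leaf_forests| =
    (\sum_(p : option 'I_n) #|[set F in least_leaf_forests | F c == p]|)%N.
  rewrite -sum1_card (partition_big (fun F : parfun n => F c) xpredT) //=.
  by apply: eq_bigr => p _; rewrite -sum1_card; apply: eq_bigl => F; rewrite !inE.
apply: leq_trans (@leq_sum _ _ _ _ _ (fun p _ => card_least_leaf_fiber p)) _.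
rewrite -big_distrl /=.
have -> : (\sum_(p : option 'I_n) above c p)%N = #|above c|.
  rewrite -sum1_card [RHS]big_mkcond /=; apply: eq_bigr => p _.
  by rewrite [p \in _]unfold_in; case: p => [u|] //=; case: (c < u)%N.
rewrite card_above [leqRHS](bigD1 c) //= [X in _ * X](bigD1 c) //= ltnn eqxx.
rewrite mul1n muln0 subn0 leq_mul2l; apply/orP; right; apply/eq_leq/eq_bigr => v vc.
have [//|cv|/val_inj vc'] := ltngtP v c; last by rewrite vc' eqxx in vc.
by rewrite muln0 subn0.
Qed.

Lemma card_graftable_forests :
  (n`! * (c * (n - c)) <=
     #|[set F : parfun n | decreasing F && (c \in graftable F)]| * (n * n.-1))%N.
Proof.
have -> : [set F : parfun n | decreasing F && (c \in graftable F)] =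
    leaf_forests :\: least_leaf_forests.
  apply/setP => F; rewrite !inE; case: (decreasing F) (is_leaf F c) => [] [] //=.
  by rewrite andbT negb_forall; apply: eq_existsb => v; rewrite negb_imply negbK.
have leaf_n1 : (#|leaf_forests| * (n * n.-1) = n`! * ((n - c) * n.-1))%N.
  by rewrite mulnA card_leaf_forests mulnA.
have least_n1 : (#|least_leaf_forests| * (n * n.-1) <= n`! * ((n - c) * (n - c).-1))%N.
  have := prod_subn_ffact 2 (ltnW (ltn_ord c)).
  rewrite ffactnS ffactn1 ffactnS ffactn1 => <-.
  by rewrite leq_mul2r card_least_leaf_forests_le orbT.
rewrite cardsD (finset.setIidPr _); last first.
  by apply/fintype.subsetP => F; rewrite inE => /andP [].
rewrite mulnBl leaf_n1; apply: leq_trans (leq_sub2l _ least_n1).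
rewrite -mulnBr -mulnBr (_ : n.-1 - (n - c).-1 = c)%N; first by rewrite [c * _]mulnC.
by have := ltn_ord c; lia.
Qed.

End GraftableCount.

Lemma sum_mul_subn n : (6 * \sum_(c < n) c * (n - c) = n.-1 * n * n.+1)%N.
Proof.
rewrite -(big_mkord xpredT (fun c => c * (n - c))%N).
have sum_id m : (2 * \sum_(0 <= c < m) c = m * m.-1)%N.
  elim: m => [|m IH]; first by rewrite big_geq.
  by rewrite big_nat_recr //= mulnDr IH; case: m {IH} => //= m; ring.
elim: n => [|n IH]; first by rewrite big_geq.
rewrite big_nat_recr //= subSnn muln1.
rewrite (eq_big_nat _ _ (F2 := fun c => c * (n - c) + c)%N); last first.
  by move=> i /andP [_ lt_in]; rewrite subSn ?mulnS 1?addnC // ltnW.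
rewrite big_split /= !mulnDr IH (_ : 6 * _ = 3 * (2 * \sum_(0 <= i < n) i))%N; last by ring.
by rewrite sum_id; case: n {IH} => //= n; ring.
Qed.

Lemma sum_graftable_ge n : (2 <= n)%N ->
  (n`! * n.+1 <= 6 * \sum_(F : parfun n | decreasing F) #|graftable F|)%N.
Proof.
move=> n2; rewrite -(@leq_pmul2r (n * n.-1)); last by rewrite muln_gt0; case: n n2 => [|[]].
have -> : (\sum_(F : parfun n | decreasing F) #|graftable F| =
    \sum_(c < n) #|[set F : parfun n | decreasing F && (c \in graftable F)]|)%N.
  under eq_bigr do rewrite -sum1_card big_mkcond /=.
  rewrite exchange_big /=; apply: eq_bigr => c _.
  by rewrite -big_mkcondr /= sum1_card cardsE.
apply: (@leq_trans (n`! * (6 * \sum_(c < n) c * (n - c)))).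
  by rewrite sum_mul_subn; apply: eq_leq; ring.
rewrite mulnCA -mulnA leq_mul2l /= big_distrr big_distrl /=.
by apply: leq_sum => c _; apply: card_graftable_forests.
Qed.

(** * Asymptotics *)

Local Open Scope classical_set_scope.
Local Open Scope ring_scope.

Section FactorialRoot.
Variable R : realType.

Definition root_ratio (f : nat -> nat) : nat -> R :=
  fun n => ((f n)%:R `^ (n%:R^-1)) / n%:R.

Lemma root_ratioE (f : nat -> nat) n : (0 < n)%N -> (0 < f n)%N ->
  root_ratio f n = expR (ln (f n)%:R / n%:R - ln n%:R).
Proof.
move=> n0 f0; rewrite /root_ratio /powR pnatr_eq0 (negbTE (lt0n_neq0 f0)) expRD expRN.
by rewrite lnK ?posrE ?ltr0n // [_^-1 * _]mulrC.
Qed.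

Lemma ln_fact_ge n : n%:R * ln (n%:R : R) - n%:R <= ln n`!%:R.
Proof.
case: n => [|m]; first by rewrite mul0r subr0 ln1.
set n := m.+1; have n0 : (0 : R) < n%:R by rewrite ltr0n.
have : n%:R ^+ n / n`!%:R <= expR (n%:R : R).
  by apply: le_trans (expR_ge1Dxn m (ler0n _ n)); rewrite lerDr.
rewrite -ler_ln ?posrE ?expR_gt0 ?divr_gt0 ?exprn_gt0 ?ltr0n ?fact_gt0 //.
by rewrite ln_div ?posrE ?exprn_gt0 ?ltr0n ?fact_gt0 // lnXn // expRK -mulr_natr; lra.
Qed.

Lemma ln_succ_sub_ge n : (0 < n)%N ->
  n.+1%:R^-1 <= ln (n.+1%:R : R) - ln n%:R.
Proof.
move=> n0; rewrite -opprB -ln_div ?posrE ?ltr0n // lerNr.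
have -> : (n%:R / n.+1%:R : R) = 1 + - n.+1%:R^-1.
  by rewrite -natr1; field; rewrite natr1 pnatr_eq0.
by apply: le_ln1Dx; rewrite ltrN2 invf_lt1 ?ltr0n // ltr1n ltnS.
Qed.

Lemma ln_fact_le n : (0 < n)%N ->
  ln (n`!%:R : R) <= n.+1%:R * ln (n%:R : R) - n%:R + 1.
Proof.
elim: n => [//|[|n] IH] _; first by rewrite ln1 mulr0 sub0r addrC subrr.
have step := ln_succ_sub_ge (ltn0Sn n).
have n2 : (0 : R) < n.+2%:R by rewrite ltr0n.
rewrite factS natrM lnM ?posrE ?ltr0n ?fact_gt0 //.
move: step; rewrite -(ler_pM2l n2) divff ?gt_eqF // => step.
move: (IH isT) step; rewrite -[n.+3%:R]natr1 -[n.+2%:R]natr1; lra.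
Qed.

Lemma ln_add1_div_cvg0 : (fun n : nat => (ln (n%:R : R) + 1) / n%:R) @ \oo --> 0.
Proof.
apply/cvgrPdist_lt => e e0; near=> n.
have n1 : (1 <= n)%N by near: n; exact: nbhs_infty_ge.
have n0 : (0 : R) < n%:R by rewrite ltr0n.
have l0 : 0 <= ln (n%:R : R) by rewrite ln_ge0 // ler1n.
have sq : ln (n%:R : R) ^+ 2 <= 2 * n%:R.
  by have := expR_ge1Dxn 1 l0; rewrite lnK ?posrE // (_ : 2`! = 2)%N //; lra.
have big_n : 6 / e ^+ 2 < n%:R by near: n; exact: nbhs_infty_gtr.
rewrite ltr_pdivrMr ?exprn_gt0 // in big_n.
rewrite sub0r normrN ger0_norm; last by rewrite divr_ge0 ?addr_ge0 // ltW.
rewrite ltr_pdivrMr // -ltr_sqr ?nnegrE ?addr_ge0 ?mulr_ge0 //; try exact: ltW.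
have n1R : 1 <= (n%:R : R) by rewrite ler1n.
have : (ln n%:R + 1) ^+ 2 <= 6 * (n%:R : R) by nra.
have : 6 * n%:R < (e * n%:R) ^+ 2 by rewrite exprMn expr2 mulrA ltr_pM2r // mulrC.
lra.
Unshelve. all: by end_near.
Qed.

Lemma root_ratio_fact_cvg : root_ratio factorial @ \oo --> expR (-1).
Proof.
pose w n := ln (n`!%:R : R) / n%:R - ln n%:R.
have w_cvg : w @ \oo --> (-1 : R).
  apply: (squeeze_cvgr (f := fun=> -1 : R)
    (h := fun n => -1 + (ln (n%:R : R) + 1) / n%:R)).
  - near=> n; have n_gt0 : (0 < n)%N by near: n; exact: nbhs_infty_gt.
    have n0 : (0 : R) < n%:R by rewrite ltr0n.
    have lb := ln_fact_ge n; have ub := ln_fact_le n_gt0.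
    rewrite /w; apply/andP; split.
      by rewrite lerBrDr ler_pdivlMr //; lra.
    rewrite lerBlDr (_ : -1 + _ + _ = (n.+1%:R * ln n%:R - n%:R + 1) / n%:R).
      by rewrite ler_pM2r ?invr_gt0.
    by rewrite -natr1; field; exact: lt0r_neq0.
  - exact: cvg_cst.
  - by rewrite -[X in _ --> X]addr0; apply: cvgD; [exact: cvg_cst|exact: ln_add1_div_cvg0].
have /(cvg_comp _ _ w_cvg) := @continuous_expR R (-1).
apply: cvg_trans; apply: near_eq_cvg; near=> n.
by rewrite /= root_ratioE ?fact_gt0 //; near: n; exact: nbhs_infty_gt.
Unshelve. all: by end_near.
Qed.

Lemma expR_mean_le (I : finType) (P : pred I) (x : I -> R) : (0 < #|P|)%N ->
  #|P|%:R * expR ((\sum_(i | P i) x i) / #|P|%:R) <= \sum_(i | P i) expR (x i).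
Proof.
move=> P0; set mu := (\sum_(i | P i) x i) / #|P|%:R.
have tangent i : expR mu * (1 + (x i - mu)) <= expR (x i).
  have := expR_ge1Dx (x i - mu); rewrite -(ler_pM2l (expR_gt0 mu)) -expRD.
  by rewrite [mu + _]addrC subrK.
apply: le_trans (ler_sum _ (fun i _ => tangent i)).
rewrite -big_distrr /= big_split /= sumrB !sumr_const.
rewrite (_ : mu *+ #|P| = \sum_(i | P i) x i); first by rewrite subrr addr0 mulrC.
by rewrite -mulr_natr divfK // pnatr_eq0 -lt0n.
Qed.

Lemma root_ratio_gap (f : nat -> nat) (c : R) : 0 < c ->
  (\forall n \near \oo, n`!%:R * expR (c * n%:R) <= (f n)%:R) ->
  ~ root_ratio f @ \oo --> expR (-1).
Proof.
move=> c0 f_ge f_cvg.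
suff : expR c * expR (-1) <= expR (-1).
  by rewrite ger_pMl ?expR_gt0 // leNgt expR_gt1 c0.
apply: ler_cvg_to (cvgMr root_ratio_fact_cvg) f_cvg _.
near=> n; have n_gt0 : (0 < n)%N by near: n; exact: nbhs_infty_gt.
have fact_le : n`!%:R * expR (c * n%:R) <= (f n)%:R by near: n; exact: f_ge.
rewrite /root_ratio mulrA ler_pM2r ?invr_gt0 ?ltr0n //.
have n1_ge0 : 0 <= n%:R^-1 :> R by rewrite invr_ge0 ler0n.
apply: le_trans (ge0_ler_powR n1_ge0 _ _ fact_le); rewrite ?nnegrE ?mulr_ge0 ?expR_ge0 //.
by rewrite powRM ?expR_ge0 // -expRM mulfK ?pnatr_eq0 -?lt0n // mulrC.
Unshelve. all: by end_near.
Qed.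

End FactorialRoot.

Lemma num_avoiding_ge (R : realType) S n :
  no_max_start S -> ~~ S 1%N pat12 -> (2 <= n)%N ->
  n`!%:R * expR (ln 2 / 6 * n%:R) <= (num_avoiding S n)%:R :> R.
Proof.
move=> hS no12 n2.
apply: (@le_trans _ _ (\sum_(F : parfun n | decreasing F) 2 ^ #|graftable F|)%N%:R).
  have pow2 k : ((2 ^ k)%N%:R : R) = expR (k%:R * ln 2).
    by rewrite expRM_natl lnK ?posrE // natrX.
  rewrite natr_sum (eq_bigr _ (fun F _ => pow2 #|graftable F|)).
  have card_dec : #|[pred F : parfun n | decreasing F]| = n`!.
    by rewrite -card_decreasing; apply: eq_card => F; rewrite inE.
  have := expR_mean_le (R := R) (P := [pred F : parfun n | decreasing F])
    (fun F => #|graftable F|%:R * ln 2).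
  rewrite card_dec fact_gt0 => /(_ isT); apply: le_trans.
  rewrite ler_pM2l ?ltr0n ?fact_gt0 // ler_expR -big_distrl /= -natr_sum.
  have := sum_graftable_ge n2; rewrite -(ler_nat R) !natrM -natr1.
  have l2 : 0 < ln (2 : R) by rewrite ln_gt0 // ltr1n.
  have f0 : (0 : R) < n`!%:R by rewrite ltr0n fact_gt0.
  rewrite ler_pdivlMr //; nra.
by rewrite ler_nat sum_pow2_graftable_le.
Qed.

Theorem proposition5p11 (R : realType) (S : patset) :
  uncovered S ->
  ((fun n : nat => ((num_avoiding S n)%:R `^ (n%:R^-1) : R) / n%:R)
      @ \oo --> expR (-1 : R)
   <-> (S 1%N pat12 \/ S 1%N pat21)).
Proof.
move=> hu; change (root_ratio R (num_avoiding S) @ \oo --> expR (-1)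
  <-> S 1%N pat12 \/ S 1%N pat21).
split=> [S_cvg|S1221]; last first.
  have -> : num_avoiding S = factorial by apply: funext => n; exact: num_avoiding_fact.
  exact: root_ratio_fact_cvg.
have [S12|no12] := boolP (S 1%N pat12); first by left.
have [S21|no21] := boolP (S 1%N pat21); first by right.
exfalso; apply: (root_ratio_gap (c := ln 2 / 6)) S_cvg.
  by rewrite divr_gt0 // ln_gt0 // ltr1n.
near=> n; have n2 : (2 <= n)%N by near: n; exact: nbhs_infty_ge.
have [noS|noS] := uncovered_no_max_start hu; first exact: num_avoiding_ge.
rewrite -num_avoiding_compl; apply: num_avoiding_ge => //.
by rewrite /compl_patset compl_pat12.
Unshelve. all: by end_near.
Qed.
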